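(* Let $\mu>0$ and let $\{x^n\}$ be generated by GAITA (as in the context) from any $x^0\in\mathbf{R}^N$. For every $n\in\mathbf{N}$, with $i=(n\bmod N)+1$, either (a) $x_i^{n+1}=0$, or (b) $|x_i^{n+1}|\geq\eta_{\mu,q}$ and $$A_i^T(Ax^{n+1}-y)+\lambda q\, sgn(x_i^{n+1})|x_i^{n+1}|^{q-1}=\Big(\frac1\mu-A_i^TA_i\Big)(x_i^n-x_i^{n+1}).$$
   Context: Let $A\in\mathbf{R}^{m\times N}$ have columns $A_1,\dots,A_N$, $y\in\mathbf{R}^m$, $\lambda>0$, $q\in(0,1)$. For a step size $\mu>0$ set $\tau_{\mu,q}=\frac{2-q}{2-2q}(2\lambda\mu(1-q))^{\frac{1}{2-q}}$ and $\eta_{\mu,q}=(2\lambda\mu(1-q))^{\frac{1}{2-q}}$. For $z\in\mathbf{R}$ let $prox_{\mu,\lambda|\cdot|^q}(z)=\arg\min_{v\in\mathbf{R}}\{\frac{(z-v)^2}{2\mu}+\lambda|v|^q\}$ (a single point when $|z|\neq\tau_{\mu,q}$). Define $\mathcal{T}(z,w)$ as the unique element of $prox_{\mu,\lambda|\cdot|^q}(z)$ if $|z|\neq\tau_{\mu,q}$, and, if $|z|=\tau_{\mu,q}$, as $sgn(z)\eta_{\mu,q}$ when $w\neq0$ and $0$ when $w=0$ ($sgn(0)=0$). GAITA: given $x^0\in\mathbf{R}^N$, for $n=0,1,2,\dots$ let $i=(n\bmod N)+1$, $z_i^n=x_i^n-\mu A_i^T(Ax^n-y)$, $x_i^{n+1}=\mathcal{T}(z_i^n,x_i^n)$,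 $x_j^{n+1}=x_j^n$ for $j\neq i$. *)

From HB Require Import structures.
From mathcomp Require Import all_boot all_order all_algebra.
From mathcomp Require Import all_classical all_reals all_analysis.
Set Implicit Arguments. Unset Strict Implicit. Unset Printing Implicit Defensive.
Import Order.TTheory GRing.Theory Num.Theory.
Local Open Scope classical_set_scope.
Local Open Scope ring_scope.

Section GAITA.
Variables (R : realType) (m N : nat) (A : 'M[R]_(m, N)) (y : 'cV[R]_m)
          (lambda q mu : R).

Definition tau_mq : R :=
  (2 - q) / (2 - 2 * q) * (2 * lambda * mu * (1 - q)) `^ (1 / (2 - q)).
Definition eta_mq : R := (2 * lambda * mu * (1 - q)) `^ (1 / (2 - q)).

(* objective of the scalar prox problem; |v|^q via powR (0 `^ q = 0 for q <> 0) *)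
Definition prox_obj (z v : R) : R := (z - v) ^+ 2 / (2 * mu) + lambda * (`|v| `^ q).

Definition prox (z : R) : set R := [set v | forall w, prox_obj z v <= prox_obj z w].

Definition Top (z w : R) : R :=
  if `|z| != tau_mq then xget 0 (prox z)
  else if w != 0 then Num.sg z * eta_mq else 0.

Definition colT_mul (i : 'I_N) (v : 'cV[R]_m) : R := ((col i A)^T *m v) 0 0.

(* one GAITA step at iteration n, index i = n mod N (0-based) *)
Definition gaita_step (i : 'I_N) (x : 'cV[R]_N) : 'cV[R]_N :=
  let z := x i 0 - mu * colT_mul i (A *m x - y) in
  \col_j (if j == i then Top z (x i 0) else x j 0).

Variable HN : (0 < N)%N.

Definition gaita_idx (n : nat) : 'I_N := Ordinal (ltn_pmod n HN).

Fixpoint gaita (x0 : 'cV[R]_N) (n : nat) : 'cV[R]_N :=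
  match n with
  | 0 => x0
  | n'.+1 => gaita_step (gaita_idx n') (gaita x0 n')
  end.

End GAITA.

From mathcomp Require Import all_boot all_order all_algebra.
From mathcomp Require Import all_classical all_reals all_analysis.
From mathcomp Require Import ring.
Set Implicit Arguments.
Unset Strict Implicit.
Unset Printing Implicit Defensive.

Import Order.TTheory GRing.Theory Num.Theory.
Local Open Scope ring_scope.

(* The new coordinate is Top(z, x_i) with z = x_i - mu A_i^T (A x - y). A nonzero
   minimiser v of (z - v)^2/(2 mu) + lambda |v|^q satisfies the first-order
   condition v - z + mu lambda q sg(v) |v|^(q-1) = 0, and comparing its objective
   with that of 0 then forces |v|^(2-q) >= 2 lambda mu (1 - q), i.e. |v| >= eta;
   the tie value sg(z) eta at |z| = tau satisfies both by direct computation.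
   Since only coordinate i moves, the residual term A_i^T (A x - y) changes by
   A_i^T A_i (x_i^(n+1) - x_i^n), and eliminating z from the first-order
   condition gives the identity. *)

Section ScalarProx.
Variables (R : realType) (lambda q mu : R).
Hypotheses (lambda_gt0 : 0 < lambda) (q_gt0 : 0 < q) (q_lt1 : q < 1)
           (mu_gt0 : 0 < mu).

Definition prox_critical (z v : R) : Prop :=
  eta_mq lambda q mu <= `|v| /\
  v - z + mu * (lambda * q * Num.sg v * `|v| `^ (q - 1)) = 0.

Let K := 2 * lambda * mu * (1 - q).

Let subq1_gt0 : 0 < 1 - q.
Proof. by rewrite subr_gt0. Qed.

Let subq2_gt0 : 0 < 2 - q.
Proof. by rewrite subr_gt0 (lt_trans q_lt1) ?ltr1n. Qed.

Let subq2q_gt0 : 0 < 2 - 2 * q.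
Proof. by rewrite subr_gt0 -[ltRHS]mulr1 ltr_pM2l. Qed.

Let K_gt0 : 0 < K.
Proof. by rewrite /K !mulr_gt0. Qed.

Let eta_gt0 : 0 < eta_mq lambda q mu.
Proof. by rewrite powR_gt0. Qed.

Lemma powR_sub2_mulpowRB1 (v : R) : 0 < v -> v `^ (2 - q) * v `^ (q - 1) = v.
Proof.
move=> v_gt0; rewrite -powRD; last by rewrite (gt_eqF v_gt0) implybT.
rewrite (_ : 2 - q + (q - 1) = 1); last by ring.
by rewrite powRr1 // ltW.
Qed.

Lemma eta_powR_sub2 : eta_mq lambda q mu `^ (2 - q) = K.
Proof.
by rewrite -powRrM mul1r mulVf ?gt_eqF // powRr1 // ltW.
Qed.

Lemma eta_powRB1 : eta_mq lambda q mu `^ (q - 1) = eta_mq lambda q mu / K.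
Proof.
apply: (mulfI (lt0r_neq0 K_gt0)); rewrite -[in LHS]eta_powR_sub2.
by rewrite powR_sub2_mulpowRB1 // mulrC divfK ?gt_eqF.
Qed.

Lemma prox_stationary (z v : R) :
  0 < v -> prox lambda q mu z v -> v - z + mu * (lambda * q * v `^ (q - 1)) = 0.
Proof.
move=> v_gt0 vmin.
pose g : R -> R := (2 * mu)^-1 \*: ((cst z - id) ^+ 2) + lambda \*: (@powR R ^~ q).
have gE (t : R) : g t = (z - t) ^+ 2 / (2 * mu) + lambda * t `^ q.
  by rewrite [_ / _]mulrC.
have g_deriv (t : R) : 0 < t ->
    is_derive t (1 : R) g ((t - z) / mu + lambda * (q * t `^ (q - 1))).
  move=> t_gt0; apply: (is_derive_eq (is_deriveD
    (is_deriveZ _ (is_deriveX 2 (is_deriveB (is_derive_cst z t 1) (is_derive_id t 1))))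
    (is_deriveZ lambda (is_derive1_powR q t_gt0)))).
  rewrite expr1 /GRing.scale /= (_ : (cst z - id) t = z - t) //.
  by field; rewrite gt_eqF.
have g_deriv0 : is_derive v (1 : R) g 0.
  apply: (@derive1_at_min _ g 0 (2 * v) v).
  - by rewrite mulr_ge0 // ltW.
  - by move=> t; rewrite in_itv /= => /andP[t_gt0 _]; case: (g_deriv t t_gt0).
  - by rewrite in_itv /= v_gt0 /= ltr_pMl // ltr1n.
  - move=> t; rewrite in_itv /= => /andP[t_gt0 _].
    by have := vmin t; rewrite /prox_obj !gtr0_norm // !gE.
case: (g_deriv v v_gt0) => _ gv; case: g_deriv0 => _; rewrite gv => gv0.
rewrite -[RHS](mulr0 mu) -gv0.
by field; rewrite gt_eqF.
Qed.

Lemma prox_stationary_ge_eta (z v : R) : 0 < v ->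
  v - z + mu * (lambda * q * v `^ (q - 1)) = 0 ->
  prox lambda q mu z v -> eta_mq lambda q mu <= v.
Proof.
move=> v_gt0 vz vmin; set P := v `^ (q - 1) in vz.
have P_gt0 : 0 < P by rewrite powR_gt0.
have obj_gap : prox_obj lambda q mu z 0 - prox_obj lambda q mu z v =
               v / (2 * mu) * (v - K * P).
  rewrite /prox_obj subr0 normr0 powR0 ?gt_eqF // mulr0 addr0 gtr0_norm //.
  rewrite -(mulr_powRB1 (ltW v_gt0) q_gt0) -/P.
  have -> : z = v + mu * (lambda * q * P) by rewrite -[RHS]subr0 -vz; ring.
  by rewrite /K; field; rewrite gt_eqF.
have KP_le : K * P <= v.
  have := vmin 0; rewrite -subr_ge0 obj_gap pmulr_rge0 ?subr_ge0 //.
  by rewrite divr_gt0 // mulr_gt0.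
have K_le : K <= v `^ (2 - q).
  by rewrite -(ler_pM2r P_gt0) powR_sub2_mulpowRB1.
apply: (@le_trans _ _ (v `^ (2 - q) `^ (1 / (2 - q)))).
  apply: ge0_ler_powR => //; rewrite ?nnegrE ?powR_ge0 ?(ltW K_gt0) //.
  by rewrite divr_ge0 // ltW.
by rewrite -powRrM mul1r divff ?gt_eqF // powRr1 // ltW.
Qed.

Lemma prox_oppr (z v : R) : prox lambda q mu z v -> prox lambda q mu (- z) (- v).
Proof.
move=> vmin w; have := vmin (- w).
by rewrite /prox_obj !normrN -opprD sqrrN opprK -opprD sqrrN.
Qed.

Lemma prox_neq0_critical (z v : R) :
  v != 0 -> prox lambda q mu z v -> prox_critical z v.
Proof.
move=> v_neq0 vmin; rewrite /prox_critical.
have [v_lt0|v_gt0|v_eq0] := ltgtP v 0; last by rewrite v_eq0 eqxx in v_neq0.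
- have Nv_gt0 : 0 < - v by rewrite oppr_gt0.
  have Nvmin := prox_oppr vmin.
  have Nvz := prox_stationary Nv_gt0 Nvmin.
  rewrite ltr0_norm // ltr0_sg //; split.
    exact: prox_stationary_ge_eta Nv_gt0 Nvz Nvmin.
  by rewrite -[RHS]oppr0 -Nvz; ring.
- rewrite gtr0_norm // gtr0_sg // mulr1.
  have vz := prox_stationary v_gt0 vmin.
  by split => //; apply: prox_stationary_ge_eta v_gt0 vz vmin.
Qed.

(* At |z| = tau the tie value sg(z) eta is critical because
   eta^(q-1) = eta / (2 lambda mu (1 - q)) and tau = (2 - q)/(2 - 2q) eta. *)
Lemma sg_mul_eta_critical (z : R) :
  `|z| = tau_mq lambda q mu -> prox_critical z (Num.sg z * eta_mq lambda q mu).
Proof.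
move=> z_tau; set e := eta_mq lambda q mu.
have z_neq0 : z != 0.
  by rewrite -normr_gt0 z_tau /tau_mq -/(eta_mq lambda q mu) mulr_gt0 // divr_gt0.
have sgz_norm : `|Num.sg z| = 1 by rewrite normr_sg z_neq0.
have Te : `|Num.sg z * e| = e by rewrite normrM sgz_norm mul1r gtr0_norm.
have sgT : Num.sg (Num.sg z * e) = Num.sg z.
  by rewrite sgrM (gtr0_sg eta_gt0) mulr1 sgr_id.
rewrite /prox_critical Te sgT eta_powRB1; split => //.
rewrite {2}[z]numEsg z_tau /tau_mq -/(eta_mq lambda q mu) -/e /K.
by field; rewrite !gt_eqF.
Qed.

Lemma Top_eq0_or_critical (z w : R) :
  Top lambda q mu z w = 0 \/ prox_critical z (Top lambda q mu z w).
Proof.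
rewrite /Top; case: ifPn => [_|/negPn/eqP z_tau].
  case: xgetP => [v _ vmin|_]; last by left.
  have [->|v_neq0] := eqVneq v 0; first by left.
  by right; apply: prox_neq0_critical.
case: ifPn => _; last by left.
by right; apply: sg_mul_eta_critical.
Qed.

End ScalarProx.

Lemma colT_mulE (R : realType) m N (A : 'M[R]_(m, N)) i (v : 'cV[R]_m) :
  colT_mul A i v = \sum_k A k i * v k 0.
Proof. by rewrite /colT_mul !mxE; apply: eq_bigr => k _; rewrite !mxE. Qed.

Lemma colT_mul_residual_update (R : realType) m N (A : 'M[R]_(m, N))
    (y : 'cV[R]_m) i (x : 'cV[R]_N) (t : R) :
  colT_mul A i (A *m (\col_j (if j == i then t else x j 0)) - y) =
  colT_mul A i (A *m x - y) + colT_mul A i (col i A) * (t - x i 0).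
Proof.
rewrite !colT_mulE mulr_suml -big_split /=; apply: eq_bigr => k _.
rewrite !mxE -mulrA -mulrDr; congr (_ * _).
rewrite (bigD1 i) //= (bigD1 i (P := xpredT)) //= !mxE eqxx.
under eq_bigr => j /negPf ji do rewrite mxE ji.
by ring.
Qed.

Theorem mainTheorem7 (R : realType) (m N : nat) (HN : (0 < N)%N)
  (A : 'M[R]_(m, N)) (y : 'cV[R]_m) (lambda q mu : R)
  (Hlam : 0 < lambda) (Hq0 : 0 < q) (Hq1 : q < 1) (Hmu : 0 < mu)
  (x0 : 'cV[R]_N) (n : nat) :
  let x := gaita A y lambda q mu HN x0 in
  let i := gaita_idx HN n in
  x n.+1 i 0 = 0 \/
  (eta_mq lambda q mu <= `|x n.+1 i 0| /\
   colT_mul A i (A *m x n.+1 - y)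
     + lambda * q * Num.sg (x n.+1 i 0) * `|x n.+1 i 0| `^ (q - 1)
   = (mu^-1 - colT_mul A i (col i A)) * (x n i 0 - x n.+1 i 0)).
Proof.
move=> x i.
set z := x n i 0 - mu * colT_mul A i (A *m x n - y).
set T := Top lambda q mu z (x n i 0).
have x_succ : x n.+1 = \col_j (if j == i then T else x n j 0) by [].
have x_succ_i : x n.+1 i 0 = T by rewrite x_succ mxE eqxx.
rewrite x_succ colT_mul_residual_update -x_succ x_succ_i.
have := Top_eq0_or_critical Hlam Hq0 Hq1 Hmu z (x n i 0).
rewrite -/T => -[T0|[eta_le T_crit]]; first by left.
right; split => //.
apply/eqP; rewrite -subr_eq0 -(mulr0 mu^-1) -T_crit /z.
by apply/eqP; field; rewrite gt_eqF.
Qed.
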